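(* Let $\mathcal{D}$ be a $p$-unipotent differential operator and let $k$ be a finite field of characteristic $p$ such that $\mathcal{D}_p$ has coefficients in $k(z)$. If $\ker(k(z),\mathcal{D}_p)\neq0$, then $\dim_{k(z^p)}\ker(k(z),\mathcal{D}_p)=1$.
   Context: $\ker(k(z),\mathcal{D}_p)$ is the set of solutions of $\mathcal{D}_p$ in $k(z)$; it is a $k(z^p)$-vector space. $\delta=z\,d/dz$. $\mathbb{C}_p$ is the completion of an algebraic closure of $\mathbb{Q}_p$; $E_p$ is the completion of $\mathbb{C}_p(z)$ for the Gauss norm; $\vartheta_{E_p}$ its ring of elements of norm $\le1$ with maximal ideal $\mathfrak{m}_p$; $\vartheta_{E_p}/\mathfrak{m}_p$ is identified with a subfield of $\overline{\mathbb{F}_p}(z)$, and for an operator $\mathcal{D}$ with coefficients in $\vartheta_{E_p}$, $\mathcal{D}_p$ is the reduction of its coefficients modulo $\mathfrak{m}_p$. MOM at zero (over any field $K$): for monic $L=\frac{d^n}{dz^n}+a_1\frac{d^{n-1}}{dz^{n-1}}+\dots+a_n\in K(z)[d/dz]$, $\alpha\in\overline K$ is singular if a pole of some $a_i$, regular singular if moreover each $(z-\alpha)^ia_i$ has no pole at $\alpha$; $\infty$ is regular singular if $0$ is regular singular after $z\mapsto1/z$; $L$ is Fuchsian if $\infty$ and all finite singular points are regular singular; writing $z^nL=\delta^n+b_1\delta^{n-1}+\dots+b_n$, the exponents at $0$ are the roots of $x^n+b_1(0)x^{n-1}+\dots+b_n(0)$; $L$ is MOM at zero if Fuchsian, $0$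 regular singular and all exponents at $0$ zero. An operator with coefficients in $E_p$ is $p$-unipotent if its coefficients lie in $\vartheta_{E_p}$ and its reduction modulo $\mathfrak{m}_p$ is nonzero and MOM at zero. *)

From HB Require Import structures.
From mathcomp Require Import all_boot all_order all_algebra fraction.
Set Implicit Arguments. Unset Strict Implicit. Unset Printing Implicit Defensive.
Import GRing.Theory.
Local Open Scope ring_scope.
Notation "x %:F" := (@FracField.tofrac _ x) : ring_scope.
From mathcomp Require Import generic_quotient.

Section RatFun.
Variable k : fieldType.
Local Notation K := {fraction {poly k}}.

Definition zK : K := ('X : {poly k})%:F.

(* d/dz on k(z), computed on an (arbitrary) representative p/q:
   (p/q)' = (p' q - p q') / q^2  (independent of the representative) *)
Definition dz (f : K) : K :=
  let r := repr f in
  let p := (frac r).1 in let q := (frac r).2 in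
  ((p^`() * q - p * q^`())%:F) / ((q ^+ 2)%:F).

(* An operator L = \sum_i L_i (d/dz)^i, coefficients in k(z), is
   represented by the polynomial \sum_i L_i X^i in {poly k(z)}. *)
Definition applyOp (L : {poly K}) (f : K) : K :=
  \sum_(i < size L) L`_i * iter i dz f.

Definition inKzp (p : nat) (g : K) : Prop :=
  exists u v : {poly k}, g = (u \Po 'X^p)%:F / (v \Po 'X^p)%:F.

(* order n of a nonzero operator and its monic normalisation
   L / lead = d^n + a_1 d^(n-1) + ... + a_n *)
Definition ordOp (L : {poly K}) : nat := (size L).-1.
Definition monCoef (L : {poly K}) (i : nat) : K :=
  L`_(ordOp L - i) / lead_coef L.

(* For phi : k -> C (C an algebraically closed extension of k),
   alpha in C and f in k(z): (z - alpha)^i f has no pole at alpha,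
   i.e. f admits a representation u/v with (z-alpha)^(i+1) not dividing v. *)
Definition ordBound (C : closedFieldType) (phi : {rmorphism k -> C})
    (alpha : C) (i : nat) (f : K) : Prop :=
  exists u v : {poly k}, v != 0 /\ f = u%:F / v%:F /\
    ~~ (('X - alpha%:P) ^+ i.+1 %| map_poly phi v).

(* alpha is a singular point of L: pole of some a_i *)
Definition singularPt C phi alpha (L : {poly K}) : Prop :=
  exists i, (1 <= i <= ordOp L)%N /\ ~ @ordBound C phi alpha 0 (monCoef L i).

Definition regSingPt C phi alpha (L : {poly K}) : Prop :=
  singularPt phi alpha L /\
  forall i, (1 <= i <= ordOp L)%N -> @ordBound C phi alpha i (monCoef L i).

Definition noPoleInf (f : K) : Prop :=
  exists u v : {poly k}, v != 0 /\ f = u%:F / v%:F /\ (size u <= size v)%N.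

(* infinity is a regular singular point (equivalently, 0 is regular
   singular after z -> 1/z): each z^i a_i has no pole at infinity *)
Definition regSingInf (L : {poly K}) : Prop :=
  forall i, (1 <= i <= ordOp L)%N -> noPoleInf (zK ^+ i * monCoef L i).

Definition fuchsian (L : {poly K}) : Prop :=
  (forall (C : closedFieldType) (phi : {rmorphism k -> C}) (alpha : C),
      singularPt phi alpha L -> regSingPt phi alpha L) /\
  regSingInf L.

Definition regSing0 (L : {poly K}) : Prop :=
  forall (C : closedFieldType) (phi : {rmorphism k -> C}) (i : nat),
    (1 <= i <= ordOp L)%N -> @ordBound C phi 0 i (monCoef L i).

Definition fallF (m : nat) : {poly K} := \prod_(j < m) ('X - (j%:R)%:P).

(* z^n L = \sum_i (z^i a_i) z^(n-i) d^(n-i) = \sum_i (z^i a_i) fallF(n-i)(delta)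
   = delta^n + b_1 delta^(n-1) + ... + b_n ; deltaForm L is this
   polynomial in delta and b_j its coefficient of delta^(n-j). *)
Definition deltaForm (L : {poly K}) : {poly K} :=
  \sum_(i < (ordOp L).+1) (zK ^+ i * monCoef L i) *: fallF (ordOp L - i).
Definition bCoef (L : {poly K}) (j : nat) : K := (deltaForm L)`_(ordOp L - j).

Definition valueAt0 (f : K) (c : k) : Prop :=
  exists u v : {poly k}, v.[0] != 0 /\ f = u%:F / v%:F /\ c = u.[0] / v.[0].

(* exponents at 0: roots (in an algebraic closure) of
   x^n + b_1(0) x^(n-1) + ... + b_n(0); all of them are zero *)
Definition exponents0_zero (L : {poly K}) : Prop :=
  forall (c : nat -> k), (forall j, (j <= ordOp L)%N -> valueAt0 (bCoef L j) (c j)) ->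
  forall (C : closedFieldType) (phi : {rmorphism k -> C}) (x : C),
    root (map_poly phi (\sum_(j < (ordOp L).+1) c j *: 'X^(ordOp L - j))) x ->
    x = 0.

Definition MOM0 (L : {poly K}) : Prop :=
  fuchsian L /\ regSing0 L /\ exponents0_zero L.

End RatFun.

(* Finally, writing f / f0 = N / v^p and
   splitting N into its monomials of degree divisible by p and the others,
   the second part multiplied by a polynomial solution would be a solution
   whose order at 0 is not divisible by p, so it vanishes.

   Only the local hypotheses at 0 (regular singularity, zero exponents) are
   used; finiteness of k only serves to embed k into an algebraically closed
   field, where the exponents are defined. *)

From HB Require Import structures.
From mathcomp Require Import all_boot all_order all_algebra fraction.
From mathcomp Require Import generic_quotient ring closed_field.
Import GRing.Theory.
Set Implicit Arguments. Unset Strict Implicit. Unset Printing Implicit Defensive.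
Local Open Scope ring_scope.

(* The quotient rule is compatible with products and differences of
   quotients.  These identities are stated over an abstract field, where
   [field] is efficient, and then instantiated in k(z). *)
Lemma quotient_ruleM (F : fieldType) (a b c d a' b' c' d' : F) : b != 0 -> d != 0 ->
  ((a' * c + a * c') * (b * d) - a * c * (b' * d + b * d')) / (b * d) ^+ 2
  = (a' * b - a * b') / b ^+ 2 * (c / d) + a / b * ((c' * d - c * d') / d ^+ 2).
Proof. by move=> hb hd; field; rewrite hb hd. Qed.

Lemma quotient_ruleB (F : fieldType) (a b c d a' b' c' d' : F) : b != 0 -> d != 0 ->
  ((a' * d + a * d' - (c' * b + c * b')) * (b * d) - (a * d - c * b) * (b' * d + b * d'))
    / (b * d) ^+ 2
  = (a' * b - a * b') / b ^+ 2 - (c' * d - c * d') / d ^+ 2.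
Proof. by move=> hb hd; field; rewrite hb hd. Qed.

Section RationalFunctions.
Variable k : fieldType.
Local Notation K := {fraction {poly k}}.

Lemma fracE (f : K) : f = (\n_(repr f))%:F / (\d_(repr f))%:F.
Proof.
have hd := denom_ratioP (repr f).
apply: (canRL (mulfK _)); first by rewrite tofrac_eq0.
rewrite -{1}[f]reprK; unlock FracField.tofrac; rewrite !piE.
apply/eqmodP; rewrite /= FracField.equivfE /FracField.mulf.
by rewrite !numden_Ratio ?oner_eq0 ?mulf_neq0 // ?oner_eq0 // !mulr1 mulrC.
Qed.

Lemma fracP (f : K) : exists u v : {poly k}, v != 0 /\ f = u%:F / v%:F.
Proof. by exists \n_(repr f), \d_(repr f); split; [exact: denom_ratioP | exact: fracE]. Qed.

Lemma tofrac_neq0 (v : {poly k}) : v != 0 -> v%:F != 0 :> K.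
Proof. by rewrite tofrac_eq0. Qed.

(* The quotient rule holds for every representative, not only the canonical
   one used in the definition of dz. *)
Lemma dzE (u v : {poly k}) : v != 0 ->
  dz (u%:F / v%:F) = (u^`() * v - u * v^`())%:F / (v ^+ 2)%:F.
Proof.
move=> hv; rewrite /dz; set f := u%:F / v%:F.
have hb := denom_ratioP (repr f); have hf := fracE f.
move: hb hf; set a := \n_(repr f); set b := \d_(repr f) => hb hf.
have cross : a * v - u * b = 0.
  apply/eqP; rewrite -tofrac_eq0 tofracB !tofracM.
  move/eqP: hf; rewrite eqr_div ?tofrac_neq0 // => /eqP <-.
  by rewrite mulrC subrr.
have cross' : a^`() * v + a * v^`() - (u^`() * b + u * b^`()) = 0.
  by rewrite -!derivM -derivB cross deriv0.
apply/eqP; rewrite eqr_div ?tofrac_neq0 ?expf_neq0 // -!tofracM tofrac_eq.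
rewrite -subr_eq0; apply/eqP.
transitivity (b * v * (a^`() * v + a * v^`() - (u^`() * b + u * b^`()))
              - (b^`() * v + b * v^`()) * (a * v - u * b)); first by ring.
by rewrite cross cross' !mulr0 subrr.
Qed.

Lemma dz_tofrac (u : {poly k}) : dz (u%:F) = (u^`())%:F.
Proof.
have := @dzE u 1 (oner_neq0 _).
by rewrite tofrac1 divr1 derivC expr1n tofrac1 divr1 mulr1 mulr0 subr0.
Qed.

Lemma dzM (f g : K) : dz (f * g) = dz f * g + f * dz g.
Proof.
have [a [b [hb ->]]] := fracP f; have [c [d [hd ->]]] := fracP g.
have hb' := tofrac_neq0 hb; have hd' := tofrac_neq0 hd.
have -> : a%:F / b%:F * (c%:F / d%:F) = (a * c)%:F / (b * d)%:F :> K.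
  by rewrite !tofracM mulf_div.
rewrite !dzE ?mulf_neq0 // !derivM !(tofracM, tofracB, tofracD, tofracXn).
exact: quotient_ruleM hb' hd'.
Qed.

Lemma dzB (f g : K) : dz (f - g) = dz f - dz g.
Proof.
have [a [b [hb ->]]] := fracP f; have [c [d [hd ->]]] := fracP g.
have hb' := tofrac_neq0 hb; have hd' := tofrac_neq0 hd.
have -> : a%:F / b%:F - c%:F / d%:F = (a * d - c * b)%:F / (b * d)%:F :> K.
  by rewrite !(tofracM, tofracB) -(mulNr c%:F) (addf_div _ _ hb' hd') mulNr.
rewrite !dzE ?mulf_neq0 // !(derivM, derivB) !(tofracM, tofracB, tofracD, tofracXn).
exact: quotient_ruleB hb' hd'.
Qed.

Lemma dz_const (u v : {poly k}) : u^`() = 0 -> v^`() = 0 -> dz (u%:F / v%:F) = 0.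
Proof.
move=> hu hv; have [->|v0] := eqVneq v 0.
  by rewrite tofrac0 invr0 mulr0 -tofrac0 dz_tofrac deriv0 tofrac0.
by rewrite dzE // hu hv !mul0r mulr0 subr0 tofrac0 mul0r.
Qed.

Lemma iter_dz_tofrac (u : {poly k}) i : iter i (@dz k) (u%:F) = (u^`(i))%:F.
Proof. by elim: i => //= i ->; rewrite dz_tofrac. Qed.

Lemma iter_dzM (c f : K) i : dz c = 0 -> iter i (@dz k) (c * f) = c * iter i (@dz k) f.
Proof. by move=> hc; elim: i => //= i ->; rewrite dzM hc mul0r add0r. Qed.

Lemma iter_dzB (f g : K) i : iter i (@dz k) (f - g) = iter i (@dz k) f - iter i (@dz k) g.
Proof. by elim: i => //= i ->; rewrite dzB. Qed.

Lemma applyOpM (L : {poly K}) (c f : K) :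
  dz c = 0 -> applyOp L (c * f) = c * applyOp L f.
Proof.
move=> hc; rewrite /applyOp mulr_sumr; apply: eq_bigr => i _.
by rewrite iter_dzM // mulrCA.
Qed.

Lemma applyOpB (L : {poly K}) (f g : K) :
  applyOp L (f - g) = applyOp L f - applyOp L g.
Proof.
rewrite /applyOp -sumrB; apply: eq_bigr => i _.
by rewrite iter_dzB mulrBr.
Qed.

End RationalFunctions.

Lemma poly_splitX (R : idomainType) (v : {poly R}) :
  v != 0 -> exists b w, v = 'X^b * w /\ w.[0] != 0.
Proof.
move=> hv; have [b [w hw Dv]] := multiplicity_XsubC v 0.
by exists b, w; rewrite hv /= in hw; rewrite Dv subr0 mulrC.
Qed.

Lemma derivn_XnM (R : nzRingType) (m s : nat) (w : {poly R}) :
  'X^s * ('X^m * w)^`(s) = 'X^m * \poly_(i < size w) (w`_i *+ (i + m) ^_ s).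
Proof.
apply/polyP => j; rewrite !coefXnM coef_derivn coef_poly.
case: (ltnP j m) => hjm.
  case: (ltnP j s) => // hjs; rewrite subnKC // coefXnM hjm mul0rn //.
case: (ltnP j s) => hjs.
  by rewrite ffact_small ?mulr0n ?subnK //; case: ifP.
rewrite subnKC // coefXnM ltnNge hjm /= subnK //.
by case: ifP => // hsz; rewrite nth_default ?mul0rn // leqNgt hsz.
Qed.

Section CharacteristicP.
Variables (k : fieldType) (p : nat).
Hypothesis hk : p \in [pchar k].
Local Notation K := {fraction {poly k}}.

Definition pSupported (P : {poly k}) : Prop :=
  forall i, ~~ (p %| i)%N -> P`_i = 0.

Lemma deriv_pSupported (P : {poly k}) : P^`() = 0 -> pSupported P.
Proof.
move=> hP [|i] hi; first by rewrite dvdn0 in hi.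
have /eqP := congr1 (fun q : {poly k} => q`_i) hP.
rewrite coef_deriv coef0 -mulr_natr mulf_eq0 => /orP [/eqP //|].
by rewrite -(dvdn_pcharf hk) (negbTE hi).
Qed.

Lemma pSupported_comp (P : {poly k}) : pSupported P -> exists Q, P = Q \Po 'X^p.
Proof.
move=> hP; have p0 : (0 < p)%N by exact: prime_gt0 (pcharf_prime hk).
exists (\poly_(i < size P) P`_(i * p)); apply/polyP => i.
rewrite coef_comp_poly_Xn //; case: ifP => hd; last by rewrite hP // hd.
rewrite coef_poly divnK //; case: ifP => // hlt.
apply: nth_default; rewrite leqNgt; apply/negP => hi; move: hlt.
by rewrite (leq_ltn_trans (leq_div _ _) hi).
Qed.

Lemma deriv_comp_Xp (Q : {poly k}) : (Q \Po 'X^p)^`() = 0.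
Proof. by rewrite deriv_comp derivXn mulrn_pchar ?mulr0 // pchar_poly. Qed.

Lemma deriv_exp_p (v : {poly k}) : (v ^+ p)^`() = 0.
Proof. by rewrite deriv_exp mulrn_pchar // pchar_poly. Qed.

Lemma kzp_const (c : K) : inKzp p c -> dz c = 0.
Proof. by move=> [u [v ->]]; apply: dz_const; exact: deriv_comp_Xp. Qed.

Lemma pSupported_kzp (N V : {poly k}) :
  pSupported N -> pSupported V -> inKzp p (N%:F / V%:F).
Proof.
by move=> /pSupported_comp [U ->] /pSupported_comp [W ->]; exists U, W.
Qed.

Lemma p_part_split (N : {poly k}) : exists N0 N1,
  N = N0 + N1 /\ pSupported N0 /\ forall i, (p %| i)%N -> N1`_i = 0.
Proof.
pose N0 := \poly_(i < size N) (if (p %| i)%N then N`_i else 0).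
exists N0, (N - N0); rewrite addrC subrK; split => //; split.
  by move=> i hi; rewrite coef_poly (negbTE hi) if_same.
move=> i hi; rewrite coefB coef_poly hi; case: ifP => hs; first by rewrite subrr.
by rewrite subr0 nth_default // leqNgt hs.
Qed.

(* Every rational function has a representative whose denominator is a
   p-th power, hence a constant for d/dz. *)
Lemma pth_power_denominator (f : K) :
  exists u v : {poly k}, v != 0 /\ f = u%:F / (v ^+ p)%:F.
Proof.
have p0 : (0 < p)%N by exact: prime_gt0 (pcharf_prime hk).
have [u [v [hv ->]]] := fracP f; exists (u * v ^+ p.-1), v; split => //.
rewrite -(prednK p0) exprSr [_ * v]mulrC !tofracM -mulf_div.
by rewrite divff ?mulr1 // tofrac_eq0 expf_neq0.
Qed.

End CharacteristicP.

Section ValueAtZero.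
Variable k : fieldType.
Local Notation K := {fraction {poly k}}.

Lemma valueAt0_tofrac (q : {poly k}) : valueAt0 (q%:F : K) q.[0].
Proof. by exists q, 1; rewrite hornerC oner_neq0 tofrac1 !divr1. Qed.

Lemma valueAt0_0 (c : k) : valueAt0 (0 : K) c -> c = 0.
Proof.
move=> [u [v [hv [h ->]]]].
have v0 : v != 0 by apply: contraNneq hv => ->; rewrite horner0.
move/eqP: h; rewrite eq_sym mulf_eq0 invr_eq0 !tofrac_eq0 (negbTE v0) orbF.
by move=> /eqP ->; rewrite horner0 mul0r.
Qed.

Lemma valueAt0D (f g : K) a b :
  valueAt0 f a -> valueAt0 g b -> valueAt0 (f + g) (a + b).
Proof.
move=> [u [v [hv [-> ->]]]] [u' [v' [hv' [-> ->]]]].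
have v0 : v != 0 by apply: contraNneq hv => ->; rewrite horner0.
have v0' : v' != 0 by apply: contraNneq hv' => ->; rewrite horner0.
exists (u * v' + u' * v), (v * v'); rewrite hornerM mulf_neq0 //; split => //.
rewrite (addf_div _ _ (tofrac_neq0 v0) (tofrac_neq0 v0')) addf_div //.
by rewrite !(tofracM, tofracD, hornerM, hornerD).
Qed.

Lemma valueAt0M (f g : K) a b :
  valueAt0 f a -> valueAt0 g b -> valueAt0 (f * g) (a * b).
Proof.
move=> [u [v [hv [-> ->]]]] [u' [v' [hv' [-> ->]]]].
exists (u * u'), (v * v'); rewrite hornerM mulf_neq0 //.
by rewrite !mulf_div !tofracM !hornerM.
Qed.

Lemma valueAt0_sum (I : finType) (F : I -> K) (c : I -> k) :
  (forall i, valueAt0 (F i) (c i)) -> valueAt0 (\sum_i F i) (\sum_i c i).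
Proof.
move=> h; elim: (index_enum I) => [|i r IH]; rewrite ?big_nil ?big_cons.
  by have := valueAt0_tofrac 0; rewrite tofrac0 horner0.
exact: valueAt0D.
Qed.

Lemma ordBound_value (C : closedFieldType) (phi : {rmorphism k -> C}) i (f : K) :
  ordBound phi 0 i f -> exists c, valueAt0 (zK k ^+ i * f) c.
Proof.
move=> [u [v [hv [-> hdiv]]]].
have [b [w [Dv hw]]] := poly_splitX hv.
have hb : (b <= i)%N.
  rewrite leqNgt; apply: contra hdiv => hlt.
  rewrite Dv rmorphM /= map_polyXn polyC0 subr0.
  by apply: dvdp_mulr; apply: dvdp_exp2l.
exists (('X^(i - b) * u).[0] / w.[0]), ('X^(i - b) * u), w; do 2!split => //.
have hXb : ('X^b)%:F != 0 :> K by rewrite tofrac_eq0 monic_neq0 ?monicXn.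
rewrite Dv -[X in zK k ^+ X](subnK hb) /zK -tofracXn exprD !tofracM.
by rewrite -!mulrA; congr (_ * _); rewrite invfM mulrCA (mulVKf hXb).
Qed.

End ValueAtZero.

Section FallingFactorial.
Variable k : fieldType.

Definition ffactPoly (s : nat) : {poly k} := \prod_(j < s) ('X - (j%:R)%:P).

Lemma ffactPolyS s : ffactPoly s.+1 = ffactPoly s * ('X - (s%:R)%:P).
Proof. by rewrite /ffactPoly big_ord_recr. Qed.

Lemma size_ffactPoly s : size (ffactPoly s) = s.+1.
Proof.
elim: s => [|s IH]; first by rewrite /ffactPoly big_ord0 size_poly1.
rewrite ffactPolyS size_Mmonic ?monicXsubC ?size_XsubC ?IH ?addn2 //.
by rewrite -size_poly_eq0 IH.
Qed.

Lemma horner_ffactPoly s m : (ffactPoly s).[m%:R] = (m ^_ s)%:R.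
Proof.
elim: s => [|s IH]; first by rewrite /ffactPoly big_ord0 hornerC ffactn0.
rewrite ffactPolyS hornerM IH hornerXsubC ffactnSr natrM.
have [hsm|hsm] := leqP s m; first by rewrite natrB.
by rewrite (ffact_small hsm) !(mul0r, mulr0n).
Qed.

Lemma fallF_ffactPoly s :
  fallF k s = map_poly ((@FracField.tofrac _) \o polyC) (ffactPoly s).
Proof.
rewrite /fallF /ffactPoly rmorph_prod; apply: eq_bigr => j _.
have hj : ((j%:R : k)%:P)%:F = j%:R by rewrite polyC_natr rmorph_nat.
by rewrite rmorphB /= map_polyX map_polyC /= hj.
Qed.

End FallingFactorial.

Lemma sum_rev (R : nmodType) (F : nat -> R) N :
  \sum_(i < N.+1) F (N - i)%N = \sum_(i < N.+1) F i.
Proof.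
rewrite (reindex_inj rev_ord_inj); apply: eq_bigr => i _.
by rewrite /= subSS subKn // -ltnS.
Qed.

Section Indicial.
Variables (k : fieldType) (C : closedFieldType) (phi : {rmorphism k -> C}).
Local Notation K := {fraction {poly k}}.
Variable L : {poly K}.
Hypotheses (hL : L != 0) (hR : regSing0 L) (hE : exponents0_zero L).
Local Notation n := (ordOp L).

Lemma size_op : size L = n.+1.
Proof. by rewrite /ordOp prednK // size_poly_gt0. Qed.

Lemma zmonCoef_value i : (i <= n)%N -> exists c, valueAt0 (zK k ^+ i * monCoef L i) c.
Proof.
case: i => [|i] hi; last exact/ordBound_value/(hR phi).
have hlead : lead_coef L != 0 by rewrite lead_coef_eq0.
exists 1; rewrite expr0 mul1r /monCoef subn0 -lead_coefE (divff hlead).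
by have := valueAt0_tofrac (1 : {poly k}); rewrite tofrac1 hornerC.
Qed.

(* If the values e_i of z^i a_i at 0 satisfy the indicial relation
   sum_i e_i m(m-1)...(m-n+i+1) = 0, then m is an exponent at 0, hence
   m = 0 in k. *)
Lemma indicial_root (e : nat -> k) (m : nat) :
  (forall i, (i <= n)%N -> valueAt0 (zK k ^+ i * monCoef L i) (e i)) ->
  \sum_(i < n.+1) e i * (m ^_ (n - i))%:R = 0 -> (m%:R : k) = 0.
Proof.
move=> he hm.
pose c j := \sum_(i < n.+1) e i * (ffactPoly k (n - i))`_(n - j).
have hc j : (j <= n)%N -> valueAt0 (bCoef L j) (c j).
  move=> hj; rewrite /bCoef /deltaForm coef_sum /c; apply: valueAt0_sum => i.
  rewrite coefZ fallF_ffactPoly coef_map /=; apply: valueAt0M; first exact/he/leq_ord.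
  by have := valueAt0_tofrac ((ffactPoly k (n - i))`_(n - j))%:P; rewrite hornerC.
have hroot : root (map_poly phi (\sum_(j < n.+1) c j *: 'X^(n - j))) (phi m%:R).
  rewrite /root horner_map /= -[X in _ == X](rmorph0 phi); apply/eqP; congr (phi _).
  rewrite -hm horner_sum /c.
  under eq_bigr do rewrite hornerZ hornerXn mulr_suml.
  rewrite exchange_big /=; apply: eq_bigr => i _.
  rewrite -horner_ffactPoly (@horner_coef_wide _ n.+1); last first.
    by rewrite size_ffactPoly ltnS leq_subr.
  rewrite -(sum_rev (fun t => (ffactPoly k (n - i))`_t * (m%:R) ^+ t)) mulr_sumr.
  by apply: eq_bigr => j _; rewrite mulrA.
by have /eqP := hE hc hroot; rewrite fmorph_eq0 => /eqP.
Qed.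

(* Euler's identity: X^s (X^m w)^(s) = X^m r_s, so z^n L(X^m w) / lead(L)
   is z^m times a combination of the z^i a_i with polynomial coefficients
   r_s whose constant terms are w(0) m(m-1)...(m-s+1). *)
Lemma euler_expansion (m : nat) (w : {poly k}) :
  zK k ^+ n / lead_coef L * applyOp L ('X^m * w)%:F =
  zK k ^+ m * \sum_(s < n.+1) (zK k ^+ (n - s) * monCoef L (n - s)) *
                (\poly_(i < size w) (w`_i *+ (i + m) ^_ s))%:F.
Proof.
rewrite /applyOp size_op !mulr_sumr; apply: eq_bigr => s _.
have hs : (s <= n)%N by rewrite -ltnS.
rewrite iter_dz_tofrac /monCoef subKn // -[X in zK k ^+ X](subnK hs) /zK exprD -!tofracXn.
have hq : ('X^s)%:F * (('X^m * w)^`(s))%:F = ('X^m)%:F * (\poly_(i < size w) (w`_i *+ (i + m) ^_ s))%:F :> K.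
  by rewrite -!tofracM derivn_XnM.
have reorder (R : comPzRingType) (a b c d e : R) : a * b * c * (d * e) = a * (d * c) * (b * e).
  by ring.
by rewrite reorder hq mulrCA.
Qed.

Lemma valuation_solution (m : nat) (w : {poly k}) :
  w.[0] != 0 -> applyOp L ('X^m * w)%:F = 0 -> (m%:R : k) = 0.
Proof.
move=> hw hsol.
have /fin_all_exists [e' he'] : forall i : 'I_n.+1,
    exists c, valueAt0 (zK k ^+ i * monCoef L i) c.
  by move=> i; apply: zmonCoef_value; rewrite -ltnS.
pose e i := e' (inord i).
have he i : (i <= n)%N -> valueAt0 (zK k ^+ i * monCoef L i) (e i).
  by move=> hi; have := he' (inord i); rewrite inordK.
pose r s := \poly_(i < size w) (w`_i *+ (i + m) ^_ s).
have w0 : w != 0 by apply: contraNneq hw => ->; rewrite horner0.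
have hsum : \sum_(s < n.+1) (zK k ^+ (n - s) * monCoef L (n - s)) * (r s)%:F = 0.
  have /eqP := euler_expansion m w; rewrite hsol mulr0 eq_sym mulf_eq0 expf_eq0.
  by rewrite /zK tofrac_eq0 polyX_eq0 andbF => /eqP.
have hval : valueAt0 (\sum_(s < n.+1) (zK k ^+ (n - s) * monCoef L (n - s)) * (r s)%:F)
               (\sum_(s < n.+1) e (n - s)%N * (w.[0] *+ m ^_ s)).
  apply: valueAt0_sum => s; apply: valueAt0M; first exact/he/leq_subr.
  have -> : w.[0] *+ m ^_ s = (r s).[0].
    by rewrite !horner_coef0 coef_poly size_poly_gt0 w0 add0n.
  exact: valueAt0_tofrac.
move: hval; rewrite hsum => /valueAt0_0 /eqP.
rewrite -(sum_rev (fun s => e (n - s)%N * (w.[0] *+ m ^_ s))).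
under eq_bigr do rewrite subKn ?leq_ord // -mulr_natr mulrCA.
rewrite -mulr_sumr mulf_eq0 (negbTE hw) /= => /eqP.
exact: indicial_root.
Qed.

End Indicial.

Section Solutions.
Variables (k : fieldType) (C : closedFieldType) (phi : {rmorphism k -> C}).
Variable p : nat.
Hypothesis hk : p \in [pchar k].
Local Notation K := {fraction {poly k}}.
Variable L : {poly K}.
Hypotheses (hL : L != 0) (hR : regSing0 L) (hE : exponents0_zero L).

Lemma dz_pth_power (v : {poly k}) : dz ((v ^+ p)%:F) = 0.
Proof. by rewrite dz_tofrac deriv_exp_p // tofrac0. Qed.

Lemma solution_order_dvd (m : nat) (w : {poly k}) :
  w.[0] != 0 -> applyOp L ('X^m * w)%:F = 0 -> (p %| m)%N.
Proof. by move=> hw /(valuation_solution phi hL hR hE hw) /eqP; rewrite (dvdn_pcharf hk). Qed.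

(* Multiplying a nonzero polynomial solution Q by a nonzero polynomial all
   of whose monomials have degree prime to p never gives a solution: the
   orders at 0 of Q and of N1 * Q would both be divisible by p, hence so
   would be the order of N1, whose lowest coefficient is nonzero. *)
Lemma offp_multiple_not_solution (N1 Q : {poly k}) :
  N1 != 0 -> Q != 0 -> (forall i, (p %| i)%N -> N1`_i = 0) ->
  applyOp L Q%:F = 0 -> applyOp L (N1 * Q)%:F != 0.
Proof.
move=> hN1 hQ hoff hsolQ; apply/eqP => hsol.
have [a [n1 [DN1 hn1]]] := poly_splitX hN1.
have [b [w [DQ hw]]] := poly_splitX hQ.
have hpb : (p %| b)%N by apply: (solution_order_dvd hw); rewrite -DQ.
have hpab : (p %| a + b)%N.
  apply: (@solution_order_dvd _ (n1 * w)); first by rewrite hornerM mulf_neq0.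
  by rewrite exprD mulrACA -DN1 -DQ.
rewrite (dvdn_addl a hpb) in hpab; move: (hoff a hpab).
by rewrite DN1 coefXnM ltnn subnn -horner_coef0 => /eqP; rewrite (negbTE hn1).
Qed.

(* Every solution is a multiple of a fixed nonzero solution f0 by an element
   of k(z^p): write f / f0 = N / v^p and split N into its p-supported part N0
   and the rest N1; then (v v0)^p (f - N0/v^p f0) = N1 Q0 is a solution, where
   Q0 / v0^p = f0, which forces N1 = 0. *)
Lemma solution_multiple (f0 f : K) :
  f0 != 0 -> applyOp L f0 = 0 -> applyOp L f = 0 ->
  exists c, inKzp p c /\ f = c * f0.
Proof.
move=> hf0 hsol0 hsol.
have [Q0 [v0 [hv0 Df0]]] := pth_power_denominator hk f0.
have [N [v [hv Dq]]] := pth_power_denominator hk (f / f0).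
have [N0 [N1 [DN [hN0 hN1]]]] := p_part_split p N.
pose c := N0%:F / (v ^+ p)%:F.
have hc : inKzp p c.
  by apply: (pSupported_kzp hk hN0); apply: (deriv_pSupported hk); exact: deriv_exp_p.
exists c; split => //.
have hV0 : (v0 ^+ p)%:F != 0 :> K by rewrite tofrac_eq0 expf_neq0.
have hV : (v ^+ p)%:F != 0 :> K by rewrite tofrac_eq0 expf_neq0.
have hQ0 : Q0 != 0.
  by apply: contraNneq hf0 => Q00; rewrite Df0 Q00 tofrac0 mul0r.
have hsolQ0 : applyOp L Q0%:F = 0.
  by rewrite -[Q0%:F](divfK hV0) -Df0 mulrC (applyOpM _ _ (dz_pth_power v0)) hsol0 mulr0.
have Df : f - c * f0 = N1%:F / (v ^+ p)%:F * f0.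
  rewrite -{1}(divfK hf0 f) Dq /c -mulrBl -mulrBl -tofracB DN.
  by rewrite [N0 + N1]addrC addrK.
have hdiff : ((v * v0) ^+ p)%:F * (f - c * f0) = (N1 * Q0)%:F.
  by rewrite Df Df0 exprMn !tofracM mulf_div mulrC (divfK (mulf_neq0 hV hV0)).
have [N10 | hN10] := eqVneq N1 0.
  by apply/eqP; rewrite -subr_eq0 Df N10 tofrac0 !mul0r.
have := offp_multiple_not_solution hN10 hQ0 hN1 hsolQ0.
rewrite -hdiff (applyOpM _ _ (dz_pth_power (v * v0))) applyOpB.
by rewrite (applyOpM _ _ (kzp_const hk hc)) hsol hsol0 mulr0 subrr mulr0 eqxx.
Qed.

End Solutions.

Unset Implicit Arguments.

Theorem mainTheorem10 (p : nat) (k : finFieldType)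
  (hp : prime p) (hk : p \in [pchar k])
  (L : {poly {fraction {poly k}}}) (hL : L != 0) (hmom : MOM0 L)
  (hker : exists f, f != 0 /\ applyOp L f = 0) :
  exists f0, f0 != 0 /\ applyOp L f0 = 0 /\
    forall f, applyOp L f = 0 <-> exists c, inKzp p c /\ f = c * f0.
Proof.
have [C [phi _]] := countable_algebraic_closure k.
have [_ [hR hE]] := hmom.
have [f0 [hf0 hsol0]] := hker.
exists f0; split; first exact: hf0.
split; first exact: hsol0.
move=> f; split; first exact: (@solution_multiple _ _ phi _ hk L hL hR hE _ f hf0 hsol0).
by move=> [c [hc ->]]; rewrite (applyOpM _ _ (kzp_const hk hc)) hsol0 mulr0.
Qed.
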